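(* Let $r, n, q$ be positive integers and $t_1,\dots,t_q$ positive integers. Suppose that for each $i\in[q]$ there exists a collection of $n$ matchings, each of size $t_i$, in an $r$-partite $r$-uniform hypergraph $H_i$ that does not admit a rainbow matching of size $t_i$. Then there exists a collection of $n$ matchings, each of size $\sum_{i=1}^q t_i$, in an $r$-partite $r$-uniform hypergraph $H$ that does not admit a rainbow matching of size $\sum_{i=1}^q t_i-q+1$.
   Context: A hypergraph is $r$-uniform if every edge contains exactly $r$ vertices. An $r$-uniform hypergraph is $r$-partite if its vertex set can be partitioned into $r$ sets $V_1,\dots,V_r$ such that every edge contains exactly one vertex from each $V_i$. A matching is a set of pairwise vertex-disjoint edges. Given a collection (repetitions allowed) of matchings $M_1,\dots,M_n$ in a hypergraph, a matching $M\subseteq \bigcup_{i=1}^n M_i$ is rainbow if there is an injection $\phi:M\to[n]$ such that every edge $e\in M$ belongs to $M_{\phi(e)}$. *)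

From mathcomp Require Import all_boot.
Set Implicit Arguments. Unset Strict Implicit. Unset Printing Implicit Defensive.

Definition rpartite_runiform (r : nat) (V : finType) (E : {set {set V}}) : Prop :=
  (forall e, e \in E -> #|e| = r) /\
  exists part : V -> 'I_r,
    forall e, e \in E -> forall i : 'I_r, #|[set v in e | part v == i]| = 1.

Definition pairwise_disjoint (V : finType) (M : {set {set V}}) : Prop :=
  forall e f, e \in M -> f \in M -> e != f -> [disjoint e & f].

Definition is_matching (V : finType) (E M : {set {set V}}) : Prop :=
  M \subset E /\ pairwise_disjoint M.

(* R is a rainbow matching for the collection (repetitions allowed)
   Ms 0, ..., Ms (n-1) of matchings. *)
Definition rainbow (V : finType) (n : nat) (Ms : 'I_n -> {set {set V}})
    (R : {set {set V}}) : Prop :=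
  R \subset \bigcup_(j < n) Ms j /\ pairwise_disjoint R /\
  exists phi : {set V} -> 'I_n,
    {in R &, injective phi} /\ (forall e, e \in R -> e \in Ms (phi e)).

Definition has_rainbow_matching_of_size (V : finType) (n : nat)
    (Ms : 'I_n -> {set {set V}}) (s : nat) : Prop :=
  exists R : {set {set V}}, #|R| = s /\ rainbow Ms R.

Definition bad_collection (r n t s : nat) : Prop :=
  exists (V : finType) (E : {set {set V}}) (Ms : 'I_n -> {set {set V}}),
    rpartite_runiform r E /\
    (forall j, is_matching E (Ms j) /\ #|Ms j| = t) /\
    ~ has_rainbow_matching_of_size Ms s.

From mathcomp Require Import all_boot zify.
Set Implicit Arguments. Unset Strict Implicit. Unset Printing Implicit Defensive.

(* Put the q extremal configurations side by side: the vertex set is the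
   disjoint union of theirs and the j-th matching is the union of their j-th
   matchings.  A rainbow matching of the union splits into rainbow matchings
   of the pieces, of sizes at most t_i - 1, so it has at most sum t_i - q
   edges.  Since r > 0 no edge is empty, so edges coming from different pieces
   are distinct and the j-th matching has exactly sum t_i edges. *)

Lemma rainbow_subset (V : finType) n (Ms : 'I_n -> {set {set V}})
    (R R' : {set {set V}}) :
  R' \subset R -> rainbow Ms R -> rainbow Ms R'.
Proof.
move=> /subsetP sR'R [/subsetP sR [dR [phi [phi_inj phiR]]]].
split; first by apply/subsetP => e /sR'R /sR.
split; first by move=> e f /sR'R eR /sR'R; exact: dR.
by exists phi; split=> [e f /sR'R eR /sR'R fR|e /sR'R]; [exact: phi_inj | exact: phiR].
Qed.

Lemma rainbow_card_lt (V : finType) n (Ms : 'I_n -> {set {set V}}) s R :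
  ~ has_rainbow_matching_of_size Ms s -> rainbow Ms R -> #|R| < s.
Proof.
move=> noR rR; rewrite ltnNge; apply/negP => /card_geqP [es [es_uniq es_size esR]].
apply: noR; exists [set e in es]; split; first by rewrite cardsE (card_uniqP es_uniq).
by apply: rainbow_subset rR; apply/subsetP => e; rewrite inE => /esR.
Qed.

Lemma set0_notin_matching r (V : finType) (E M : {set {set V}}) :
  0 < r -> rpartite_runiform r E -> is_matching E M -> set0 \notin M.
Proof.
move=> r_gt0 [uE _] [/subsetP sME _]; apply/negP => /sME /uE.
by rewrite cards0 => r0; rewrite -r0 in r_gt0.
Qed.

Lemma pairwise_disjointU (V : finType) (A B : {set {set V}}) :
  pairwise_disjoint A -> pairwise_disjoint B ->
  (forall a b, a \in A -> b \in B -> [disjoint a & b]) ->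
  pairwise_disjoint (A :|: B).
Proof.
move=> dA dB dAB e f /setUP [eA|eB] /setUP [fA|fB]; first exact: dA.
- by move=> _; exact: dAB.
- by move=> _; rewrite disjoint_sym; exact: dAB.
- exact: dB.
Qed.

Definition lift_edges (V W : finType) (f : V -> W) (E : {set {set V}}) :
    {set {set W}} :=
  [set f @: e | e : {set V} in E].

Section InjectiveLift.

Variables (V W : finType) (f : V -> W).
Hypothesis f_inj : injective f.

Lemma mem_lift_edges (E : {set {set V}}) (e : {set V}) :
  (f @: e \in lift_edges f E) = (e \in E).
Proof. exact: mem_imset (imset_inj f_inj). Qed.

Lemma card_lift_edges (E : {set {set V}}) : #|lift_edges f E| = #|E|.
Proof. exact: card_imset (imset_inj f_inj). Qed.

Lemma is_matching_lift (E M : {set {set V}}) :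
  is_matching E M -> is_matching (lift_edges f E) (lift_edges f M).
Proof.
move=> [sME dM]; split; first exact: imsetS.
move=> _ _ /imsetP [a aM ->] /imsetP [b bM ->] ab.
by rewrite imset_disjoint //; apply: dM => //; apply: contraNneq ab => ->.
Qed.

Lemma lift_edges_partition r (p : V -> 'I_r) (part : W -> 'I_r)
    (E : {set {set V}}) :
  (forall v, part (f v) = p v) ->
  (forall e, e \in E -> forall i, #|[set v in e | p v == i]| = 1) ->
  forall e, e \in lift_edges f E -> forall i, #|[set w in e | part w == i]| = 1.
Proof.
move=> part_f pE _ /imsetP [e eE ->] i.
have -> : [set w in f @: e | part w == i] = f @: [set v in e | p v == i].
  apply/setP => w; rewrite inE; apply/andP/imsetP => [[/imsetP [v ve ->] pv]|[v]].
    by exists v; rewrite // inE ve -part_f.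
  by rewrite inE => /andP [ve pv] ->; rewrite part_f imset_f.
by rewrite card_imset //; exact: pE.
Qed.

Lemma rainbow_preimage n (Ms : 'I_n -> {set {set W}}) (Ns : 'I_n -> {set {set V}})
    (R : {set {set W}}) :
  (forall j (e : {set V}), f @: e \in Ms j -> e \in Ns j) -> rainbow Ms R ->
  rainbow Ns [set e : {set V} | f @: e \in R].
Proof.
move=> MsNs [/subsetP sR [dR [phi [phi_inj phiR]]]].
split.
  apply/subsetP => e; rewrite inE => /sR /bigcupP [j _ ej].
  by apply/bigcupP; exists j => //; exact: MsNs.
split.
  move=> a b; rewrite !inE => aR bR ab.
  rewrite -(imset_disjoint f_inj); apply: dR => //.
  by apply: contra ab => /eqP /(imset_inj f_inj) ->.
exists (fun e : {set V} => phi (f @: e)); split.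
  by move=> a b; rewrite !inE => aR bR /(phi_inj _ _ aR bR) /(imset_inj f_inj).
by move=> e; rewrite inE => /phiR; exact: MsNs.
Qed.

End InjectiveLift.

Section DisjointUnion.

Variables V1 V2 : finType.
Local Notation inl1 := (@inl V1 V2).
Local Notation inr2 := (@inr V1 V2).

Definition sum_edges (E1 : {set {set V1}}) (E2 : {set {set V2}}) :
    {set {set V1 + V2}} :=
  lift_edges inl1 E1 :|: lift_edges inr2 E2.

Lemma imset_inl_inr_eq (a : {set V1}) (b : {set V2}) :
  inl1 @: a = inr2 @: b -> a = set0 /\ b = set0.
Proof.
move=> ab; split; apply/setP => x; rewrite inE; apply/negbTE/negP => xX.
  by have := imset_f inl1 xX; rewrite ab => /imsetP [].
by have := imset_f inr2 xX; rewrite -ab => /imsetP [].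
Qed.

Lemma mem_sum_edges_inl (E1 : {set {set V1}}) (E2 : {set {set V2}})
    (e : {set V1}) :
  set0 \notin E2 -> (inl1 @: e \in sum_edges E1 E2) = (e \in E1).
Proof.
move=> E2_0; rewrite inE mem_lift_edges; last exact: inl_inj.
case: (e \in E1) => //=; apply/imsetP => -[b bE2 /imset_inl_inr_eq [_ b0]].
by move: E2_0; rewrite -b0 bE2.
Qed.

Lemma mem_sum_edges_inr (E1 : {set {set V1}}) (E2 : {set {set V2}})
    (e : {set V2}) :
  set0 \notin E1 -> (inr2 @: e \in sum_edges E1 E2) = (e \in E2).
Proof.
move=> E1_0; rewrite inE mem_lift_edges; last exact: inr_inj.
case: (e \in E2); rewrite ?orbT // orbF.
apply/imsetP => -[a aE1 /esym /imset_inl_inr_eq [a0 _]].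
by move: E1_0; rewrite -a0 aE1.
Qed.

Lemma card_sum_edges (E1 : {set {set V1}}) (E2 : {set {set V2}}) :
  set0 \notin E1 -> #|sum_edges E1 E2| = #|E1| + #|E2|.
Proof.
move=> E1_0; rewrite -(card_lift_edges (@inl_inj V1 V2)).
rewrite -(card_lift_edges (@inr_inj V1 V2)).
apply/eqP; rewrite (leq_card_setU _ _).2.
apply/pred0P => w /=; apply/andP => -[/imsetP [a aE1 ->]].
by case/imsetP => b _ /imset_inl_inr_eq [a0 _]; move: E1_0; rewrite -a0 aE1.
Qed.

Lemma is_matching_sum (E1 : {set {set V1}}) (E2 : {set {set V2}})
    (M1 : {set {set V1}}) (M2 : {set {set V2}}) :
  is_matching E1 M1 -> is_matching E2 M2 ->
  is_matching (sum_edges E1 E2) (sum_edges M1 M2).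
Proof.
move=> /(is_matching_lift (@inl_inj V1 V2)) [sM1 dM1].
move=> /(is_matching_lift (@inr_inj V1 V2)) [sM2 dM2].
split; first exact: setUSS.
apply: pairwise_disjointU => // _ _ /imsetP [a _ ->] /imsetP [b _ ->].
by apply/pred0P => w /=; apply/andP => -[/imsetP [x _ ->] /imsetP [y _]].
Qed.

Lemma rpartite_runiform_sum r (E1 : {set {set V1}}) (E2 : {set {set V2}}) :
  rpartite_runiform r E1 -> rpartite_runiform r E2 ->
  rpartite_runiform r (sum_edges E1 E2).
Proof.
move=> [uE1 [p1 hp1]] [uE2 [p2 hp2]]; split.
  move=> _ /setUP [] /imsetP [e eE ->]; rewrite card_imset.
  - exact: uE1.
  - exact: inl_inj.
  - exact: uE2.
  - exact: inr_inj.
exists (fun w => match w with inl v => p1 v | inr v => p2 v end).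
move=> e /setUP []; apply: lift_edges_partition => //.
- exact: inl_inj.
- exact: inr_inj.
Qed.

Lemma rainbow_sum_card n (Ms1 : 'I_n -> {set {set V1}})
    (Ms2 : 'I_n -> {set {set V2}}) (R : {set {set V1 + V2}}) :
  rainbow (fun j => sum_edges (Ms1 j) (Ms2 j)) R ->
  #|R| <= #|[set e : {set V1} | inl1 @: e \in R]|
          + #|[set e : {set V2} | inr2 @: e \in R]|.
Proof.
move=> [/subsetP sR _].
rewrite -(card_lift_edges (@inl_inj V1 V2)) -(card_lift_edges (@inr_inj V1 V2)).
apply: leq_trans (leq_card_setU _ _); apply/subset_leq_card/subsetP => e eR.
have /bigcupP [j _ /setUP [] /imsetP [x _ ex]] := sR e eR; subst e; apply/setUP.
  by left; apply: imset_f; rewrite inE.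
by right; apply: imset_f; rewrite inE.
Qed.

End DisjointUnion.

Lemma bad_collection_nil r n : bad_collection r n 0 1.
Proof.
exists void, set0, (fun _ => set0); split.
  by split=> [e|]; [rewrite inE | exists (@of_void _) => e; rewrite inE].
split.
  by move=> j; split; [split=> [|e f]; [exact: sub0set | rewrite inE] | exact: cards0].
move=> [R [cardR [sR _]]]; move: sR cardR.
by rewrite big1_eq subset0 => /eqP ->; rewrite cards0.
Qed.

Lemma bad_collection_add r n t1 t2 s1 s2 : 0 < r ->
  bad_collection r n t1 s1.+1 -> bad_collection r n t2 s2.+1 ->
  bad_collection r n (t1 + t2) (s1 + s2).+1.
Proof.
move=> r_gt0 [V1 [E1 [Ms1 [hE1 [hMs1 noR1]]]]] [V2 [E2 [Ms2 [hE2 [hMs2 noR2]]]]].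
have Ms1_0 j : set0 \notin Ms1 j by apply: set0_notin_matching r_gt0 hE1 (hMs1 j).1.
have Ms2_0 j : set0 \notin Ms2 j by apply: set0_notin_matching r_gt0 hE2 (hMs2 j).1.
exists (V1 + V2)%type, (sum_edges E1 E2), (fun j => sum_edges (Ms1 j) (Ms2 j)).
split; first exact: rpartite_runiform_sum.
split.
  move=> j; have [mj1 cj1] := hMs1 j; have [mj2 cj2] := hMs2 j.
  by rewrite card_sum_edges // cj1 cj2; split; first exact: is_matching_sum.
move=> [R [cardR rR]].
have lt1 : #|[set e : {set V1} | inl @: e \in R]| < s1.+1.
  apply: rainbow_card_lt noR1 _.
  apply: rainbow_preimage rR => [|j e]; first exact: inl_inj.
  by rewrite mem_sum_edges_inl.
have lt2 : #|[set e : {set V2} | inr @: e \in R]| < s2.+1.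
  apply: rainbow_card_lt noR2 _.
  apply: rainbow_preimage rR => [|j e]; first exact: inr_inj.
  by rewrite mem_sum_edges_inr.
have := rainbow_sum_card rR; rewrite cardR; lia.
Qed.

Lemma bad_collection_sum r n q (t s : 'I_q -> nat) : 0 < r ->
  (forall i, bad_collection r n (t i) (s i).+1) ->
  bad_collection r n (\sum_(i < q) t i) (\sum_(i < q) s i).+1.
Proof.
move=> r_gt0; elim: q t s => [|q IH] t s bad_ts.
  by rewrite !big_ord0; exact: bad_collection_nil.
by rewrite !big_ord_recr; apply: bad_collection_add => //; apply: IH.
Qed.

Theorem lemma2p4 (r n q : nat) (t : 'I_q -> nat) :
  0 < r -> 0 < n -> 0 < q -> (forall i, 0 < t i) ->
  (forall i : 'I_q, bad_collection r n (t i) (t i)) ->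
  bad_collection r n (\sum_(i < q) t i) ((\sum_(i < q) t i) - q + 1).
Proof.
move=> r_gt0 _ _ t_gt0 bad_t.
have sum_t : \sum_(i < q) t i = \sum_(i < q) (t i).-1 + q.
  rewrite -[X in _ + X]card_ord -sum1_card -big_split /=.
  by apply: eq_bigr => i _; rewrite addn1 prednK.
rewrite {2}sum_t addnK addn1; apply: bad_collection_sum => // i.
by rewrite prednK.
Qed.
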